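(* For every $n\ge1$, the co-cloaktic monoid $\mathcal A_n^*/{\equiv^{\mathrm{co}}_{\mathrm{clk}}}$ satisfies every semigroup identity satisfied by the monoid $\mathrm{TMat}_n(\mathbb T)$ of $n\times n$ upper triangular tropical matrices.
   Context: $\mathcal A_n=\{a_1<\cdots<a_n\}$. For $w\in\mathcal A_n^*$, $L_{[i,j]}(w)$ is the maximal length of a nondecreasing (not necessarily contiguous) subword of $w$ with all letters in $\{a_i,\dots,a_j\}$; $u\equiv_{\mathrm{clk}}v$ iff $L_{[i,j]}(u)=L_{[i,j]}(v)$ for all $1\le i\le j\le n$. $\mathrm{cmr}(a_\ell)=a_na_{n-1}\cdots a_1$ with $a_{n-\ell+1}$ omitted, extended multiplicatively to words; $u\equiv^{\mathrm{co}}_{\mathrm{clk}}v$ iff $\mathrm{cmr}(u)\equiv_{\mathrm{clk}}\mathrm{cmr}(v)$. $\mathrm{TMat}_n(\mathbb T)$: upper triangular matrices over $\mathbb T=\mathbb R\cup\{-\infty\}$ with max-plus product. A semigroup identity is a formal equality $u=v$ of two distinct nonempty words over variables; $S$ satisfies it if $\varphi(u)=\varphi(v)$ for every homomorphism $\varphi$ from the free semigroup on the variables to $S$. *)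

From Stdlib Require Import Reals.
From mathcomp Require Import all_boot.

Set Implicit Arguments.
Unset Strict Implicit.
Unset Printing Implicit Defensive.

(* Alphabet A_n = {a_1 < ... < a_n} is encoded as 'I_n : letter a_k is the
   ordinal k-1.  Words are sequences of letters. *)
Definition word (n : nat) := seq 'I_n.

(* L_[i,j](w) (0-based i j): maximal length of a nondecreasing (not
   necessarily contiguous) subword of w all of whose letters lie in
   {a_i,...,a_j}.  Subwords are the masks of w. *)
Definition Lij (n : nat) (i j : nat) (w : word n) : nat :=
  \max_(m : (size w).-tuple bool |
          sorted (fun a b : 'I_n => (a <= b)%N) (mask m w)
          && all (fun a : 'I_n => (i <= a <= j)%N) (mask m w))
     size (mask m w).

Definition clk_equiv (n : nat) (u v : word n) : Prop :=
  forall i j : 'I_n, (i <= j)%N -> Lij i j u = Lij i j v.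

(* cmr(a_l) = a_n a_{n-1} ... a_1 with a_{n-l+1} omitted.  With 0-based
   k = l-1 the omitted letter has 0-based index n-1-k, i.e. rev_ord k. *)
Definition cmr_letter (n : nat) (k : 'I_n) : word n :=
  [seq a <- rev (enum 'I_n) | a != rev_ord k].

Definition cmr (n : nat) (w : word n) : word n :=
  flatten (map (@cmr_letter n) w).

Definition coclk_equiv (n : nat) (u v : word n) : Prop :=
  clk_equiv (cmr u) (cmr v).

Definition vword := seq nat.

Definition subst (n : nat) (s : nat -> word n) (u : vword) : word n :=
  flatten (map s u).

(* The co-cloaktic monoid satisfies u = v: for every homomorphism from the
   free semigroup to A_n^*/coclk, i.e. every assignment of (classes of)
   words to variables, the images agree. *)
Definition coclk_satisfies (n : nat) (u v : vword) : Prop :=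
  forall s : nat -> word n, coclk_equiv (subst s u) (subst s v).

Definition trop := option R.

Definition tadd (a b : trop) : trop :=
  match a, b with
  | None, x => x
  | x, None => x
  | Some x, Some y => Some (Rmax x y)
  end.

Definition tmul (a b : trop) : trop :=
  match a, b with
  | Some x, Some y => Some (Rplus x y)
  | _, _ => None
  end.

Definition tmat (n : nat) := 'I_n -> 'I_n -> trop.

Definition upper_tri (n : nat) (A : tmat n) : Prop :=
  forall i j : 'I_n, (j < i)%N -> A i j = None.

Definition tmmul (n : nat) (A B : tmat n) : tmat n :=
  fun i j => foldr tadd None [seq tmul (A i k) (B k j) | k <- enum 'I_n].

Definition tmid (n : nat) : tmat n :=
  fun i j => if i == j then Some R0 else None.

Definition teval (n : nat) (s : nat -> tmat n) (u : vword) : tmat n :=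
  foldr (fun x M => tmmul (s x) M) (@tmid n) u.

Definition tmat_satisfies (n : nat) (u v : vword) : Prop :=
  forall s : nat -> tmat n, (forall x, upper_tri (s x)) ->
    forall i j : 'I_n, teval s u i j = teval s v i j.

Definition semigroup_identity (u v : vword) : Prop :=
  u <> [::] /\ v <> [::] /\ u <> v.

From Stdlib Require Import Reals.
From mathcomp Require Import all_boot.

Set Implicit Arguments.
Unset Strict Implicit.
Unset Printing Implicit Defensive.

(* The statistics [L_[i,j]] of a word [w] fill an upper triangular tropical
   matrix [M w] with entries [L_[i,j](w)] for [i <= j], and [M (w1 w2)] is the
   max-plus product [M w1 * M w2]: a longest nondecreasing subword of [w1 w2]
   with letters in [[i,j]] splits at some letter [k] into such subwords of
   [w1] and [w2] in [[i,k]] and [[k,j]].  Hence [M] is a semigroup morphism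
   from the free monoid to TMat_n(T), and so is [M \o cmr].  Evaluating an
   identity of TMat_n(T) on the matrices [M (cmr (s x))] and reading off the
   entries yields [cmr (s u) = cmr (s v)] in the cloaktic monoid. *)

(* [ndlen w i j] is [L_[i,j](w)] computed by a recursion on [w]: keeping the
   first letter [a] forces the rest of the subword to lie in [[a,j]]. *)
Fixpoint ndlen (n : nat) (w : word n) (i j : nat) : nat :=
  if w is a :: w' then
    maxn (ndlen w' i j) (if (i <= a <= j)%N then (ndlen w' a j).+1 else 0)
  else 0.

Section Ndlen.

Variable n : nat.
Implicit Types (w : word n) (i j k : nat).

Local Notation leo := (fun a b : 'I_n => (a <= b)%N).
Local Notation in_range i j := (fun a : 'I_n => (i <= a <= j)%N).

Let leo_trans : transitive leo := fun b a c => @leq_trans b a c.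

Lemma ndlen_homo_lo w i i' j : (i <= i')%N -> (ndlen w i' j <= ndlen w i j)%N.
Proof.
move=> le_ii'; elim: w => //= a w IH.
rewrite geq_max (leq_trans IH (leq_maxl _ _)) /=.
case: ifP => // /andP[le_i'a le_aj].
by rewrite (leq_trans le_ii' le_i'a) le_aj leq_maxr.
Qed.

Lemma size_mask_leq_ndlen w (m : seq bool) i j :
  sorted leo (mask m w) -> all (in_range i j) (mask m w) ->
  (size (mask m w) <= ndlen w i j)%N.
Proof.
elim: w m i => [|a w IH] [|[] m] i //= sorted_mw range_mw.
- move: sorted_mw; rewrite (path_sortedE leo_trans) => /andP[a_le sorted_mw].
  move: range_mw => /andP[a_in range_mw].
  rewrite a_in; apply: leq_trans (leq_maxr _ _); rewrite ltnS.
  apply: IH => //; apply/allP => x x_in.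
  by rewrite (allP a_le x x_in); case/andP: (allP range_mw x x_in).
- exact: leq_trans (IH _ _ sorted_mw range_mw) (leq_maxl _ _).
Qed.

Lemma ndlen_mask_attained w i j : exists m : seq bool,
  [/\ size m = size w, sorted leo (mask m w),
      all (in_range i j) (mask m w) & size (mask m w) = ndlen w i j].
Proof.
elim: w i => [|a w IH] i /=; first by exists [::].
have [m [size_m sorted_m range_m size_mw]] := IH i.
have [a_in | a_out] := boolP (i <= a <= j)%N; last first.
  by exists (false :: m); rewrite /= size_m size_mw maxn0.
have [_ | lt_keep] := leqP (ndlen w i j) (ndlen w a j).+1; last first.
  by exists (false :: m); rewrite /= size_m size_mw.
have {m size_m sorted_m range_m size_mw}
  [m [size_m sorted_m range_m size_mw]] := IH a.
have [le_ia _] := andP a_in.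
exists (true :: m); rewrite /= size_m size_mw a_in; split=> //.
  rewrite (path_sortedE leo_trans) sorted_m andbT.
  by apply/allP => x /(allP range_m) /andP[].
apply/allP => x /(allP range_m) /andP[le_ax ->].
by rewrite (leq_trans le_ia le_ax).
Qed.

Lemma Lij_ndlen w i j : Lij i j w = ndlen w i j.
Proof.
apply/eqP; rewrite eqn_leq; apply/andP; split.
  by apply/bigmax_leqP => m /andP[]; apply: size_mask_leq_ndlen.
have [m [size_m sorted_m range_m <-]] := ndlen_mask_attained w i j.
have size_m' : size m == size w by apply/eqP.
by apply: (leq_bigmax_cond (Tuple size_m')); rewrite /= sorted_m range_m.
Qed.

Lemma leq_ndlen_cat w1 w2 i k j : (i <= k)%N -> (k <= j)%N ->
  (ndlen w1 i k + ndlen w2 k j <= ndlen (w1 ++ w2) i j)%N.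
Proof.
elim: w1 i => [|a w1 IH] i le_ik le_kj /=; first exact: ndlen_homo_lo.
rewrite addn_maxl geq_max (leq_trans (IH i le_ik le_kj) (leq_maxl _ _)) /=.
case: ifP => [/andP[le_ia le_ak] | _].
  rewrite le_ia (leq_trans le_ak le_kj) /= addSn.
  by apply: leq_trans (leq_maxr _ _); rewrite ltnS IH.
rewrite add0n; apply: leq_trans (leq_maxl _ _).
exact: leq_trans (leq_addl _ _) (IH i le_ik le_kj).
Qed.

Lemma ndlen_cat_split w1 w2 i j : (i <= j)%N ->
  exists2 k, (i <= k <= j)%N &
    (ndlen (w1 ++ w2) i j <= ndlen w1 i k + ndlen w2 k j)%N.
Proof.
elim: w1 i => [|a w1 IH] i le_ij; first by exists i; rewrite ?leqnn ?le_ij.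
have [k k_in le_split] := IH i le_ij.
have skip_a : exists2 k, (i <= k <= j)%N &
    (ndlen (w1 ++ w2) i j <= ndlen (a :: w1) i k + ndlen w2 k j)%N.
  by exists k; rewrite // (leq_trans le_split) // leq_add2r leq_maxl.
rewrite [ndlen (_ :: _) i j]/=.
case: ifP => [/andP[le_ia le_aj] | _]; last by rewrite maxn0.
have [_ // | lt_keep] := leqP (ndlen (w1 ++ w2) a j).+1 (ndlen (w1 ++ w2) i j).
have [k' /andP[le_ak' le_k'j] le_split'] := IH a le_aj.
exists k'; first by rewrite (leq_trans le_ia le_ak') le_k'j.
have keep : ((ndlen w1 a k').+1 <= ndlen (a :: w1) i k')%N.
  by rewrite /= le_ia le_ak' leq_maxr.
by rewrite (leq_trans _ (leq_add keep (leqnn _))) // addSn ltnS.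
Qed.

Lemma ndlen_cat w1 w2 i (j : 'I_n) : (i <= j)%N ->
  ndlen (w1 ++ w2) i j = \max_(k : 'I_n | i <= k <= j) (ndlen w1 i k + ndlen w2 k j).
Proof.
move=> le_ij; apply/eqP; rewrite eqn_leq; apply/andP; split.
  have [k /andP[le_ik le_kj] le_split] := ndlen_cat_split w1 w2 le_ij.
  have lt_kn : (k < n)%N := leq_ltn_trans le_kj (ltn_ord j).
  by rewrite (leq_trans le_split) // (leq_bigmax_cond (Ordinal lt_kn)) ?le_ik.
by apply/bigmax_leqP => k /andP[]; apply: leq_ndlen_cat.
Qed.

End Ndlen.

Lemma maxn_INR a b : INR (maxn a b) = Rmax (INR a) (INR b).
Proof.
have [le_ab | /ltnW le_ba] := leqP a b; [rewrite Rmax_right | rewrite Rmax_left] => //.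
all: by apply/le_INR/leP.
Qed.

Lemma foldr_tadd_INR (I : Type) (s : seq I) (P : pred I) (f : I -> nat) :
  foldr tadd None [seq if P k then Some (INR (f k)) else None | k <- s] =
  if has P s then Some (INR (\max_(k <- s | P k) f k)) else None.
Proof.
elim: s => [|x s IH] //=; rewrite big_cons IH.
case: (P x) => //=; case has_s: (has P s) => //=; first by rewrite maxn_INR.
by rewrite big_hasC ?has_s // maxn0.
Qed.

Lemma tmmul_tmid n (A : tmat n) i j : tmmul A (@tmid n) i j = A i j.
Proof.
have tadd_idem (a : trop) : tadd a a = a.
  by case: a => //= r; rewrite Rmax_left //; apply: Rle_refl.
have tmul_unit (a : trop) : tmul a (Some R0) = a.
  by case: a => //= r; rewrite Rplus_0_r.
rewrite /tmmul.
suff -> : forall s, foldr tadd None [seq tmul (A i k) (tmid k j) | k <- s] =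
                    if j \in s then A i j else None.
  by rewrite mem_enum.
rewrite /tmid; elim=> //= k s ->; rewrite in_cons eq_sym.
have [-> | _] := eqVneq k j; last by case: (A i k).
by rewrite tmul_unit; case: (j \in s); case: (A i j).
Qed.

Lemma eq_tmmulr n (A B B' : tmat n) i j : (forall k, B k j = B' k j) ->
  tmmul A B i j = tmmul A B' i j.
Proof. by move=> eq_B; congr foldr; apply: eq_map => k; rewrite eq_B. Qed.

Definition tmat_of_word n (w : word n) : tmat n :=
  fun i j => if (i <= j)%N then Some (INR (ndlen w i j)) else None.

Lemma tmat_of_word_upper n (w : word n) : upper_tri (tmat_of_word w).
Proof. by move=> i j lt_ji; rewrite /tmat_of_word leqNgt lt_ji. Qed.

Lemma tmmul_tmat_of_word n (w1 w2 : word n) i j :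
  tmmul (tmat_of_word w1) (tmat_of_word w2) i j = tmat_of_word (w1 ++ w2) i j.
Proof.
pose P := fun k : 'I_n => (i <= k <= j)%N.
rewrite /tmmul (eq_map (g := fun k => if P k then
   Some (INR (ndlen w1 i k + ndlen w2 k j)) else None)); last first.
  move=> k; rewrite /P /tmat_of_word.
  by case: (i <= k)%N; case: (k <= j)%N; rewrite //= plus_INR.
rewrite foldr_tadd_INR /tmat_of_word big_enum_cond.
have [le_ij | lt_ji] := leqP i j; last first.
  case: hasP => // -[k _ /andP[le_ik le_kj]].
  by move: lt_ji; rewrite ltnNge (leq_trans le_ik le_kj).
have -> : has P (enum 'I_n).
  by apply/hasP; exists j; rewrite ?mem_enum // /P le_ij leqnn.
by rewrite ndlen_cat.
Qed.

(* [tmat_of_word [::]] is not [tmid]: its entries above the diagonal are [0],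
   not [-oo].  Hence the product must be nonempty. *)
Lemma teval_tmat_of_word n (t : nat -> word n) (u : vword) i j : u <> [::] ->
  teval (fun x => tmat_of_word (t x)) u i j = tmat_of_word (subst t u) i j.
Proof.
elim: u i j => [|x [|y u] IH] i j // _.
  by rewrite /teval /= tmmul_tmid /subst /= cats0.
rewrite /= (@eq_tmmulr _ _ _ (tmat_of_word (subst t (y :: u)))) => [|k].
  exact: tmmul_tmat_of_word.
exact: IH.
Qed.

Lemma cmr_subst n (s : nat -> word n) (u : vword) :
  cmr (subst s u) = subst (fun x => cmr (s x)) u.
Proof. by elim: u => //= x u; rewrite /cmr /subst /= map_cat flatten_cat => ->. Qed.

Theorem mainTheorem10 (n : nat) (hn : (1 <= n)%N) (u v : vword) :
  semigroup_identity u v ->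
  tmat_satisfies n u v ->
  coclk_satisfies n u v.
Proof.
move=> [u_ne [v_ne _]] tmat_uv s i j le_ij.
rewrite !cmr_subst !Lij_ndlen.
have := tmat_uv _ (fun x => tmat_of_word_upper (cmr (s x))) i j.
rewrite !teval_tmat_of_word // /tmat_of_word le_ij.
by case=> /INR_eq.
Qed.
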